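(* Let $\mathcal H=\bigoplus_{n\ge0}\mathcal H_n$ be a connected graded Hopf algebra over a field $\mathbb K$ of characteristic zero, let $\alpha:\mathcal H_1\to\mathbb K$ be a nonzero linear map and let $q=q_\alpha$ be the associated inverse-factorial character. Then $q$ is multiplicative: $q(xy)=q(x)q(y)$ for all $x,y\in\mathcal H$. Moreover, write $q=\varepsilon+\varphi$ with $\varphi(\mathbf 1)=0$ and, for $h\in\mathbb K$, set $q^{*h}(x):=\sum_{p\ge0}\binom{h}{p}\varphi^{*p}(x)$ (a finite sum for each $x$). Then for every $h\in\mathbb K$, $q^{*h}$ is a character of $\mathcal H$ and $$q^{*h}(x)=h^{|x|}\,q(x)$$ for every homogeneous $x\in\mathcal H$.
   Context: A connected graded Hopf algebra is $\mathcal H=\bigoplus_{n\ge0}\mathcal H_n$ with $\mathcal H_0=\mathbb K\mathbf 1$, product and coproduct $\Delta$ respecting the grading; $|x|$ is the degree of a homogeneous $x$, $\varepsilon$ the counit. Sweedler notation: $\Delta(x)=\sum_{(x)}x_1\otimes x_2$; the reduced coproduct is $\Delta'(x)=\Delta(x)-x\otimes\mathbf 1-\mathbf 1\otimes x=\sum'_{(x)}x'\otimes x''$, where for homogeneous $x$ the $x',x''$ may be taken homogeneous of degrees $<|x|$ adding up to $|x|$. Convolution of linear forms: $(\phi*\psi)(x)=\sum_{(x)}\phi(x_1)\psi(x_2)$, with unit $\varepsilon$; $\varphi^{*0}=\varepsilon$. The inverse-factorial character $q_\alpha$ is the linear form on $\mathcal H$ determined by $q_\alpha(\mathbf 1)=1$,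 $q_\alpha|_{\mathcal H_1}=\alpha$, and for homogeneous $x$ with $|x|\ge2$: $q_\alpha(x)=\frac{1}{2^{|x|}-2}\sum'_{(x)}q_\alpha(x')q_\alpha(x'')$ (equivalently $q_\alpha*q_\alpha(x)=2^{|x|}q_\alpha(x)$ for all homogeneous $x$). *)

From HB Require Import structures.
From mathcomp Require Import all_boot all_order all_algebra.
From Stdlib Require Import ClassicalEpsilon.
Set Implicit Arguments. Unset Strict Implicit. Unset Printing Implicit Defensive.
Import Order.TTheory GRing.Theory Num.Theory.
Local Open Scope ring_scope.

Definition linform (K : fieldType) (H : lmodType K) (f : H -> K) : Prop :=
  forall (a : K) (x y : H), f (a *: x + y) = a * f x + f y.

(* Elements of H (x) H are represented by finite sums  sum_i u_i.1 (x) u_i.2,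
   i.e. by sequences of pairs.  Two such representations denote the same
   tensor iff every pair of linear forms f,g gives the same value of
   sum_i f(u_i.1) g(u_i.2)  (the dual separates points of H (x) H over a field). *)
Definition teq (K : fieldType) (H : lmodType K) (s t : seq (H * H)) : Prop :=
  forall f g : H -> K, linform f -> linform g ->
    \sum_(u <- s) f u.1 * g u.2 = \sum_(u <- t) f u.1 * g u.2.

(* A connected graded Hopf algebra over K.  The grading is given by the family
   of projections proj n : H -> H_n; the coproduct cop x is a Sweedler
   representation of Delta(x). *)
Record cgHopf (K : fieldType) (H : algType K) := CGHopf {
  proj : nat -> H -> H;
  cop : H -> seq (H * H);
  eps : H -> K;
  anti : H -> H;
  proj_lin : forall n (a : K) (x y : H),
      proj n (a *: x + y) = a *: proj n x + proj n y;
  proj_proj : forall n m x, proj n (proj m x) = if n == m then proj m x else 0;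
  proj_fin : forall x, exists N, forall n, (N <= n)%N -> proj n x = 0;
  proj_sum : forall x N, (forall n, (N <= n)%N -> proj n x = 0) ->
      x = \sum_(n < N) proj n x;
  mul_graded : forall n m x y, proj n x = x -> proj m y = y ->
      proj (n + m) (x * y) = x * y;
  one_graded : proj 0 1 = 1;
  connected : forall x, proj 0 x = x -> exists c : K, x = c *: 1;
  cop_lin : forall (a : K) x y,
      teq (cop (a *: x + y)) ([seq (a *: u.1, u.2) | u <- cop x] ++ cop y);
  coassoc : forall x (f g k : H -> K), linform f -> linform g -> linform k ->
      \sum_(u <- cop x) (\sum_(v <- cop u.1) f v.1 * g v.2) * k u.2 =
      \sum_(u <- cop x) f u.1 * (\sum_(v <- cop u.2) g v.1 * k v.2);
  eps_lin : linform eps;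
  counitl : forall x, \sum_(u <- cop x) eps u.1 *: u.2 = x;
  counitr : forall x, \sum_(u <- cop x) eps u.2 *: u.1 = x;
  (* coproduct respects grading: for x in H_n, Delta x in sum_p H_p (x) H_(n-p) *)
  cop_graded : forall n x, proj n x = x ->
      teq (cop x) [seq (proj p.2 p.1.1, proj (n - p.2) p.1.2)
                   | p <- [seq (u, i) | u <- cop x, i <- iota 0 n.+1]];
  eps_graded : forall n x, (0 < n)%N -> proj n x = x -> eps x = 0;
  cop_mul : forall x y,
      teq (cop (x * y)) [seq (u.1 * v.1, u.2 * v.2) | u <- cop x, v <- cop y];
  cop_one : teq (cop 1) [:: (1, 1)];
  eps_mul : forall x y, eps (x * y) = eps x * eps y;
  eps_one : eps 1 = 1;
  anti_lin : forall (a : K) x y, anti (a *: x + y) = a *: anti x + anti y;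
  antil : forall x, \sum_(u <- cop x) anti u.1 * u.2 = eps x *: 1;
  antir : forall x, \sum_(u <- cop x) u.1 * anti u.2 = eps x *: 1
}.

Section Ops.
Variables (K : fieldType) (H : algType K) (HH : cgHopf H).

Definition conv (phi psi : H -> K) : H -> K :=
  fun x => \sum_(u <- cop HH x) phi u.1 * psi u.2.

Fixpoint convpow (phi : H -> K) (p : nat) : H -> K :=
  match p with
  | 0 => eps HH
  | p'.+1 => conv phi (convpow phi p')
  end.

Definition gbnd (x : H) : nat :=
  proj1_sig (constructive_indefinite_description _ (proj_fin HH x)).

Definition gbinom (h : K) (p : nat) : K :=
  (\prod_(i < p) (h - i%:R)) / (p`!)%:R.

(* q^{*h}(x) := sum_(p >= 0) binom(h,p) phi^{*p}(x) with phi = q - eps;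
   the terms with p > gbnd x vanish, so the sum is truncated there. *)
Definition qpow (q : H -> K) (h : K) : H -> K :=
  fun x => \sum_(p < (gbnd x).+1)
             gbinom h p * convpow (fun y => q y - eps HH y) p x.

Definition is_qalpha (alpha q : H -> K) : Prop :=
  linform q /\ q 1 = 1 /\
  (forall x, proj HH 1 x = x -> q x = alpha x) /\
  (forall n x, (2 <= n)%N -> proj HH n x = x ->
     q x = (2%:R ^+ n - 2%:R)^-1 *
           (\sum_(u <- cop HH x) q u.1 * q u.2 - q x * q 1 - q 1 * q x)).

Definition is_character (f : H -> K) : Prop :=
  linform f /\ f 1 = 1 /\ forall x y, f (x * y) = f x * f y.

End Ops.

From Pilot Require Import Defs.
From HB Require Import structures.
From mathcomp Require Import all_boot all_order all_algebra.
From mathcomp Require Import ring zify.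
From Stdlib Require Import ClassicalEpsilon.
Set Implicit Arguments. Unset Strict Implicit. Unset Printing Implicit Defensive.
Import Order.TTheory GRing.Theory Num.Theory.
Local Open Scope ring_scope.

(** The recursion defining [q] says exactly that [q * q = 2^n q] on [H_n]. For [x], [y]
  homogeneous of degrees [n], [m], expanding [(q * q)(xy)] along [Delta(xy) = Delta(x) Delta(y)]
  gives terms indexed by bidegrees [(p, r)]; by induction on [n + m] every term with
  [0 < p + r < n + m] factors, while the two extreme terms each contribute the defect
  [q(xy) - q(x) q(y)], so [2^(n+m) - 2] times the defect vanishes.
  By repeated squaring [q^{*2^j} = 2^(jn) q] on [H_n], and [phi^{*p}] vanishes on [H_n] for
  [p > n]; hence [h |-> q^{*h}(x)] is a polynomial of degree at most [n] in [h] that agrees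
  with [h^n q(x)] at the [n + 1] points [2^j], so everywhere. *)

Section LinearForms.
Variables (K : fieldType) (V : lmodType K).
Implicit Types (f : V -> K).

Lemma linform0 f : linform f -> f 0 = 0.
Proof.
by move=> lf; have := lf 1 0 0; rewrite scale1r addr0 mul1r -{1}[f 0]addr0 => /addrI <-.
Qed.

Lemma linformZ f a x : linform f -> f (a *: x) = a * f x.
Proof. by move=> lf; rewrite -[a *: x]addr0 lf linform0 // addr0. Qed.

Lemma linformD f x y : linform f -> f (x + y) = f x + f y.
Proof. by move=> lf; rewrite -[x]scale1r lf mul1r scale1r. Qed.

Lemma linform_sum f I (r : seq I) (F : I -> V) : linform f ->
  f (\sum_(i <- r) F i) = \sum_(i <- r) f (F i).
Proof.
move=> lf; elim: r => [|i r IH]; first by rewrite !big_nil linform0.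
by rewrite !big_cons linformD // IH.
Qed.

End LinearForms.

Lemma linform_mulr (K : fieldType) (A : algType K) (f : A -> K) c :
  linform f -> linform (fun a => f (a * c)).
Proof. by move=> lf k a b; rewrite mulrDl -scalerAl lf. Qed.

Lemma linform_mull (K : fieldType) (A : algType K) (f : A -> K) c :
  linform f -> linform (fun a => f (c * a)).
Proof. by move=> lf k a b; rewrite mulrDr -scalerAr lf. Qed.

Section Convolution.
Variables (K : fieldType) (H : algType K) (HH : cgHopf H).
Local Notation cop := (cop HH).
Local Notation eps := (eps HH).
Local Notation conv := (conv HH).
Local Notation convpow := (convpow HH).
Implicit Types (f g k : H -> K) (x : H).

Lemma linform_conv f g : linform f -> linform g -> linform (conv f g).
Proof.
move=> lf lg a x y; rewrite /Defs.conv (cop_lin HH a x y lf lg) big_cat big_map /=.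
by rewrite mulr_sumr; congr (_ + _); apply: eq_bigr => u _; rewrite linformZ // mulrA.
Qed.

Lemma conv_epsl g x : linform g -> conv eps g x = g x.
Proof.
move=> lg; rewrite /Defs.conv -[in RHS](counitl HH x) linform_sum //.
by apply: eq_bigr => u _; rewrite linformZ.
Qed.

Lemma conv_epsr f x : linform f -> conv f eps x = f x.
Proof.
move=> lf; rewrite /Defs.conv -[in RHS](counitr HH x) linform_sum //.
by apply: eq_bigr => u _; rewrite linformZ // mulrC.
Qed.

Lemma convA f g k x : linform f -> linform g -> linform k ->
  conv f (conv g k) x = conv (conv f g) k x.
Proof. by move=> lf lg lk; rewrite /Defs.conv (coassoc HH x lf lg lk). Qed.

Lemma linform_convpow f p : linform f -> linform (convpow f p).
Proof. by move=> lf; elim: p => [|p IH] /=; [apply: eps_lin | apply: linform_conv]. Qed.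

Lemma convpowD f a b x : linform f ->
  convpow f (a + b) x = conv (convpow f a) (convpow f b) x.
Proof.
move=> lf; have lp p := linform_convpow p lf.
elim: a x => [|a IH] x /=; first by rewrite conv_epsl.
by rewrite -(convA _ lf (lp a) (lp b)); apply: eq_bigr => u _; rewrite IH.
Qed.

End Convolution.

Section Grading.
Variables (K : fieldType) (H : algType K) (HH : cgHopf H).
Local Notation cop := (cop HH).
Local Notation eps := (eps HH).
Local Notation proj := (proj HH).
Local Notation conv := (conv HH).
Implicit Types (f g : H -> K) (x y z : H).

Lemma projK n z : proj n (proj n z) = proj n z.
Proof. by rewrite proj_proj eqxx. Qed.

Lemma linform_proj f n : linform f -> linform (fun z => f (proj n z)).
Proof. by move=> lf a x y; rewrite proj_lin lf. Qed.

Lemma eps_proj0 z : eps (proj 0 z) = eps z.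
Proof.
have [M HM] := proj_fin HH z.
have hM n : (M.+1 <= n)%N -> proj n z = 0 by move=> ?; apply: HM; apply: ltnW.
rewrite [in RHS](proj_sum hM) linform_sum ?big_ord_recl /=; last exact: eps_lin.
rewrite big1 ?addr0 // => i _.
by apply: (@eps_graded _ _ HH i.+1) => //; rewrite projK.
Qed.

Lemma proj0E z : proj 0 z = eps z *: 1.
Proof.
have [c hc] := connected (projK 0 z).
by rewrite hc -eps_proj0 hc linformZ ?eps_one ?mulr1 //; apply: eps_lin.
Qed.

Lemma counit_projl f n x : proj n x = x -> linform f ->
  \sum_(u <- cop x) eps u.1 * f (proj n u.2) = f x.
Proof.
move=> hx lf; rewrite -[in RHS]hx -[in RHS](counitl HH x).
rewrite (linform_sum _ _ (linform_proj n lf)).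
by apply: eq_bigr => u _; rewrite (linformZ _ _ (linform_proj n lf)).
Qed.

Lemma counit_projr f n x : proj n x = x -> linform f ->
  \sum_(u <- cop x) f (proj n u.1) * eps u.2 = f x.
Proof.
move=> hx lf; rewrite -[in RHS]hx -[in RHS](counitr HH x).
rewrite (linform_sum _ _ (linform_proj n lf)).
by apply: eq_bigr => u _; rewrite (linformZ _ _ (linform_proj n lf)) mulrC.
Qed.

Lemma conv_gradedE f g n x : proj n x = x -> linform f -> linform g ->
  conv f g x = \sum_(p < n.+1) \sum_(u <- cop x) f (proj p u.1) * g (proj (n - p) u.2).
Proof.
move=> hx lf lg; rewrite /Defs.conv (cop_graded hx lf lg) big_map big_allpairs.
have -> : iota 0 n.+1 = index_iota 0 n.+1 by rewrite /index_iota subn0.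
by rewrite exchange_big big_mkord.
Qed.

Lemma conv_mul_gradedE f g n m x y : proj n x = x -> proj m y = y ->
  linform f -> linform g ->
  conv f g (x * y) = \sum_(p < n.+1) \sum_(r < m.+1) \sum_(u <- cop x) \sum_(v <- cop y)
    f (proj p u.1 * proj r v.1) * g (proj (n - p) u.2 * proj (m - r) v.2).
Proof.
move=> hx hy lf lg.
have expand_y a b : \sum_(v <- cop y) f (a * v.1) * g (b * v.2) =
    \sum_(r < m.+1) \sum_(v <- cop y) f (a * proj r v.1) * g (b * proj (m - r) v.2).
  exact: conv_gradedE hy (linform_mull a lf) (linform_mull b lg).
have expand_x a b : \sum_(u <- cop x) f (u.1 * a) * g (u.2 * b) =
    \sum_(p < n.+1) \sum_(u <- cop x) f (proj p u.1 * a) * g (proj (n - p) u.2 * b).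
  exact: conv_gradedE hx (linform_mulr a lf) (linform_mulr b lg).
rewrite /Defs.conv (cop_mul HH x y lf lg) big_allpairs_dep /=.
under eq_bigr => u _ do rewrite expand_y.
rewrite exchange_big; under eq_bigr => r _ do rewrite exchange_big.
under eq_bigr => r _ do under eq_bigr => v _ do rewrite expand_x.
under eq_bigr => r _ do rewrite exchange_big.
rewrite exchange_big; apply: eq_bigr => p _; apply: eq_bigr => r _.
exact: exchange_big.
Qed.

Lemma linform_mul_homog f : linform f ->
  (forall n m x y, proj n x = x -> proj m y = y -> f (x * y) = f x * f y) ->
  forall x y, f (x * y) = f x * f y.
Proof.
move=> lf hom x y.
have [Mx /proj_sum ->] := proj_fin HH x; have [My /proj_sum ->] := proj_fin HH y.
rewrite mulr_suml !linform_sum // mulr_suml; apply: eq_bigr => n _.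
rewrite mulr_sumr linform_sum // mulr_sumr; apply: eq_bigr => m _.
exact: hom (projK _ _) (projK _ _).
Qed.

End Grading.

Lemma sum_corners (V : zmodType) n m (F G : nat -> nat -> V) :
  (0 < n + m)%N ->
  (forall p r, (p <= n)%N -> (r <= m)%N -> (0 < p + r < n + m)%N -> F p r = G p r) ->
  \sum_(p < n.+1) \sum_(r < m.+1) F p r =
    \sum_(p < n.+1) \sum_(r < m.+1) G p r + (F 0 0 - G 0 0) + (F n m - G n m).
Proof.
move=> nm_gt0 FG.
suff E : \sum_(p < n.+1) \sum_(r < m.+1) F p r - \sum_(p < n.+1) \sum_(r < m.+1) G p r =
    (F 0 0 - G 0 0) + (F n m - G n m) by rewrite -addrA -E addrC subrK.
rewrite -sumrB; under eq_bigr do rewrite -sumrB.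
rewrite pair_big (bigD1 (ord0, ord0)) //= (bigD1 (ord_max, ord_max)) /=; last first.
  by rewrite xpair_eqE negb_and -!val_eqE /=; lia.
rewrite big1 ?addr0 // => -[p r] /andP[].
rewrite !xpair_eqE !negb_and -!val_eqE /= => ne0 nenm.
have hp := ltn_ord p; have hr := ltn_ord r.
by rewrite FG ?subrr //; lia.
Qed.

Lemma sum_bin_pascal (R : pzRingType) (c : nat -> R) m :
  \sum_(p < m.+1) 'C(m, p)%:R * (c p + c p.+1) =
  \sum_(p < m.+2) 'C(m.+1, p)%:R * c p.
Proof.
have bump0 i : bump 0 i = i.+1 by rewrite /bump leq0n add1n.
under eq_bigr => i _ do rewrite mulrDr.
rewrite big_split /= [in RHS]big_ord_recl /=.
under [in RHS]eq_bigr => i _ do rewrite bump0 binS natrD mulrDl.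
rewrite big_split /= [X in X + _ = _]big_ord_recl /= !bin0 addrA; congr (_ + _).
under [X in _ + X = _]eq_bigr => i _ do rewrite bump0.
by rewrite [in RHS]big_ord_recr /= bin_small // mul0r addr0.
Qed.

Lemma sum_ord_trunc (V : nmodType) a b (F : nat -> V) : (a <= b)%N ->
  (forall i, (a <= i)%N -> F i = 0) -> \sum_(i < b) F i = \sum_(i < a) F i.
Proof.
move=> hab hF; rewrite (big_ord_widen _ _ hab) [LHS](bigID (fun i : 'I_b => (i < a)%N)) /=.
by rewrite [X in _ + X]big1 ?addr0 // => i; rewrite -leqNgt; apply: hF.
Qed.

Lemma eq_sum_ord_trunc (V : nmodType) a b (F : nat -> V) :
  (forall i, (a <= i)%N -> F i = 0) -> (forall i, (b <= i)%N -> F i = 0) ->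
  \sum_(i < a) F i = \sum_(i < b) F i.
Proof.
move=> ha hb; case/orP: (leq_total a b) => hab; first by rewrite (sum_ord_trunc hab ha).
by rewrite (sum_ord_trunc hab hb).
Qed.

Lemma gbinom_interpolation (K : fieldType) n (c : nat -> K) (a : K) (rs : seq K) :
  uniq rs -> (n < size rs)%N ->
  {in rs, forall w, \sum_(p < n.+1) gbinom w p * c p = w ^+ n * a} ->
  forall h, \sum_(p < n.+1) gbinom h p * c p = h ^+ n * a.
Proof.
move=> rs_uniq rs_size rs_eq h.
pose P : {poly K} := \sum_(p < n.+1) (c p / (p`!)%:R) *:
   \prod_(0 <= i < p) ('X - (i%:R)%:P) - a *: 'X^n.
have Pval w : P.[w] = \sum_(p < n.+1) gbinom w p * c p - w ^+ n * a.
  rewrite hornerD hornerN horner_sum hornerZ hornerXn mulrC; congr (_ - _).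
  apply: eq_bigr => p _; rewrite hornerZ horner_prod /gbinom big_mkord.
  under eq_bigr => i _ do rewrite hornerXsubC.
  by rewrite mulrC mulrA mulrAC.
have Psize : (size P <= n.+1)%N.
  rewrite (leq_trans (size_polyD _ _)) // geq_max size_polyN.
  rewrite (leq_trans (size_scale_leq _ _)) ?size_polyXn // andbT.
  rewrite (leq_trans (size_sum _ _ _)) //; apply/bigmax_leqP => p _.
  rewrite (leq_trans (size_scale_leq _ _)) // size_prod_XsubC size_iota subn0.
  exact: ltn_ord.
have P0 : P = 0.
  apply: (roots_geq_poly_eq0 _ rs_uniq); last exact: leq_trans Psize rs_size.
  by apply/allP => w /rs_eq; rewrite /root Pval => ->; rewrite subrr.
by apply/eqP; rewrite -subr_eq0 -Pval P0 horner0.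
Qed.

Section CharacteristicZero.
Variables (K : fieldType) (charK0 : [pchar K] =i pred0).

Lemma natf_eq0 n : ((n%:R : K) == 0) = (n == 0)%N.
Proof. by move/pcharf0P: charK0; apply. Qed.

Lemma natf_inj : injective (fun n : nat => n%:R : K).
Proof.
move=> a b /= e; wlog le_ab : a b e / (a <= b)%N.
  by move=> W; case/orP: (leq_total a b) => h; [|apply/esym]; apply: W.
have : ((b - a)%N%:R : K) == 0 by rewrite natrB // e subrr.
by rewrite natf_eq0 subn_eq0 => le_ba; apply/eqP; rewrite eqn_leq le_ab.
Qed.

Lemma exp2_sub2_neq0 n : (2 <= n)%N -> (2%:R ^+ n - 2%:R : K) != 0.
Proof.
move=> hn; have h4 : (2 ^ 2 <= 2 ^ n)%N by rewrite leq_exp2l.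
rewrite -natrX -natrB; last exact: leq_trans h4.
by rewrite natf_eq0 subn_eq0 -ltnNge; apply: leq_trans h4.
Qed.

Lemma gbinom_nat k p : gbinom (k%:R : K) p = 'C(k, p)%:R.
Proof.
rewrite /gbinom; case: (leqP p k) => hpk.
  have -> : \prod_(i < p) ((k%:R : K) - i%:R) = (k ^_ p)%:R.
    rewrite ffact_prod natr_prod; apply: eq_bigr => i _.
    by rewrite natrB // ltnW // (leq_trans (ltn_ord i) hpk).
  by rewrite -bin_ffact natrM mulfK // natf_eq0 -lt0n fact_gt0.
by rewrite bin_small // (bigD1 (Ordinal hpk)) //= subrr !mul0r.
Qed.

End CharacteristicZero.

Section InverseFactorialCharacter.
Variables (K : fieldType) (H : algType K) (HH : cgHopf H).
Hypothesis charK0 : [pchar K] =i pred0.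
Variable q : H -> K.
Hypotheses (qlin : linform q) (q1 : q 1 = 1).
Hypothesis qrec : forall n x, (2 <= n)%N -> proj HH n x = x ->
  q x = (2%:R ^+ n - 2%:R)^-1 *
        (\sum_(u <- cop HH x) q u.1 * q u.2 - q x * q 1 - q 1 * q x).
Local Notation cop := (cop HH).
Local Notation eps := (eps HH).
Local Notation proj := (proj HH).
Local Notation conv := (conv HH).
Local Notation convpow := (convpow HH).
Implicit Types (x y z : H).

Lemma q_proj0 z : q (proj 0 z) = eps z.
Proof. by rewrite proj0E linformZ // q1 mulr1. Qed.

Lemma q_proj0l a b : q (proj 0 a * b) = eps a * q b.
Proof. by rewrite proj0E -scalerAl mul1r linformZ. Qed.

Lemma conv_qq n x : proj n x = x -> conv q q x = 2%:R ^+ n * q x.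
Proof.
case: n => [|[|n]] hx.
- rewrite (conv_gradedE hx qlin qlin) big_ord1 expr0 mul1r.
  by rewrite -[in RHS](counit_projl hx qlin); apply: eq_bigr => u _; rewrite (q_proj0 u.1).
- rewrite (conv_gradedE hx qlin qlin) !big_ord_recl big_ord0 addr0 /=.
  rewrite expr1 mulr2n mulrDl mul1r.
  rewrite -[in X in _ = X + _](counit_projl hx qlin).
  rewrite -[in X in _ = _ + X](counit_projr hx qlin).
  by congr (_ + _); apply: eq_bigr => u _; rewrite ?(q_proj0 u.1) ?(q_proj0 u.2).
- have n2 : (2 <= n.+2)%N by [].
  have E := qrec n2 hx; rewrite q1 mulr1 mul1r -/(conv q q x) in E.
  have E2 : (2%:R ^+ n.+2 - 2%:R) * q x = conv q q x - q x - q x.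
    by rewrite [in LHS]E mulVKf // exp2_sub2_neq0.
  have -> : conv q q x = (2%:R ^+ n.+2 - 2%:R) * q x + q x + q x by rewrite E2; ring.
  ring.
Qed.

Lemma q_cop_mul_counitl n m x y : proj n x = x -> proj m y = y ->
  \sum_(u <- cop x) \sum_(v <- cop y)
    q (proj 0 u.1 * proj 0 v.1) * q (proj n u.2 * proj m v.2) = q (x * y).
Proof.
move=> hx hy; rewrite -(counit_projl hx (linform_mulr y qlin)); apply: eq_bigr => u _.
rewrite -(counit_projl hy (linform_mull (proj n u.2) qlin)) mulr_sumr.
by apply: eq_bigr => v _; rewrite q_proj0l q_proj0 mulrA.
Qed.

Lemma q_cop_mul_counitr n m x y : proj n x = x -> proj m y = y ->
  \sum_(u <- cop x) \sum_(v <- cop y)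
    q (proj n u.1 * proj m v.1) * q (proj 0 u.2 * proj 0 v.2) = q (x * y).
Proof.
move=> hx hy; rewrite -(counit_projr hx (linform_mulr y qlin)); apply: eq_bigr => u _.
rewrite -(counit_projr hy (linform_mull (proj n u.1) qlin)) mulr_suml.
by apply: eq_bigr => v _; rewrite q_proj0l q_proj0 mulrA mulrAC.
Qed.

Lemma q_mul_homog N n m x y : (n + m < N)%N -> proj n x = x -> proj m y = y ->
  q (x * y) = q x * q y.
Proof.
elim: N n m x y => // N IH n m x y hN hx hy.
have [n0|n_gt0] := posnP n.
  by rewrite -hx n0 proj0E -scalerAl mul1r !linformZ // q1 mulr1.
have [m0|m_gt0] := posnP m.
  by rewrite -hy m0 proj0E -scalerAr mulr1 !linformZ // q1 mulr1 mulrC.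
have nm2 : (2 <= n + m)%N by lia.
pose T p r := \sum_(u <- cop x) \sum_(v <- cop y)
  q (proj p u.1 * proj r v.1) * q (proj (n - p) u.2 * proj (m - r) v.2).
pose T' p r := (\sum_(u <- cop x) q (proj p u.1) * q (proj (n - p) u.2)) *
               (\sum_(v <- cop y) q (proj r v.1) * q (proj (m - r) v.2)).
have expand : conv q q (x * y) = \sum_(p < n.+1) \sum_(r < m.+1) T p r :=
  conv_mul_gradedE hx hy qlin qlin.
have T_inner p r : (p <= n)%N -> (r <= m)%N -> (0 < p + r < n + m)%N -> T p r = T' p r.
  move=> hp hr /andP[lo hi]; rewrite /T /T' mulr_suml; apply: eq_bigr => u _.
  rewrite mulr_sumr; apply: eq_bigr => v _.
  rewrite (IH p r) ?projK //; last by lia.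
  by rewrite (IH (n - p) (m - r))%N ?projK //; [ring | lia].
have T00 : T 0 0 = q (x * y) by rewrite /T !subn0; apply: q_cop_mul_counitl.
have Tnm : T n m = q (x * y) by rewrite /T !subnn; apply: q_cop_mul_counitr.
have T'00 : T' 0 0 = q x * q y.
  rewrite /T' !subn0 -(counit_projl hx qlin) -(counit_projl hy qlin).
  by congr (_ * _); apply: eq_bigr => u _; rewrite q_proj0.
have T'nm : T' n m = q x * q y.
  rewrite /T' !subnn -(counit_projr hx qlin) -(counit_projr hy qlin).
  by congr (_ * _); apply: eq_bigr => u _; rewrite q_proj0.
have T'sum : \sum_(p < n.+1) \sum_(r < m.+1) T' p r = conv q q x * conv q q y.
  rewrite (conv_gradedE hx qlin qlin) (conv_gradedE hy qlin qlin) mulr_suml.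
  by apply: eq_bigr => p _; rewrite mulr_sumr.
have := conv_qq (mul_graded hx hy).
rewrite expand (sum_corners _ T_inner); last by lia.
rewrite T'sum (conv_qq hx) (conv_qq hy) T00 Tnm T'00 T'nm exprD => E.
have Ed : (2%:R ^+ n * 2%:R ^+ m - 2%:R) * (q (x * y) - q x * q y) =
    2%:R ^+ n * 2%:R ^+ m * q (x * y) -
    (2%:R ^+ n * q x * (2%:R ^+ m * q y) + (q (x * y) - q x * q y) + (q (x * y) - q x * q y)).
  by ring.
rewrite -E subrr -exprD in Ed; apply/eqP; rewrite -subr_eq0.
by move/eqP: Ed; rewrite mulf_eq0 (negbTE (exp2_sub2_neq0 charK0 nm2)).
Qed.

Lemma q_mul x y : q (x * y) = q x * q y.
Proof.
apply: (linform_mul_homog (HH := HH)) => // n m {}x {}y hx hy.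
exact: (q_mul_homog (ltnSn (n + m)) hx hy).
Qed.

Local Notation phi := (fun y => q y - eps y).

Lemma linform_phi : linform phi.
Proof. by move=> a x y /=; rewrite qlin (eps_lin HH); ring. Qed.

Lemma convpow_phi_eq0 p n x : (n < p)%N -> proj n x = x -> convpow phi p x = 0.
Proof.
elim: p n x => [|p IH] n x //= n_lt_p hx.
rewrite (conv_gradedE hx linform_phi (linform_convpow HH p linform_phi)).
apply: big1 => -[[|i] hi] _; apply: big1 => u _ /=.
  by rewrite q_proj0 eps_proj0 subrr mul0r.
by rewrite (IH (n - i.+1)%N) ?mulr0 ?projK //; lia.
Qed.

Lemma conv_q_phi g x : linform g -> conv q g x = g x + conv phi g x.
Proof.
move=> lg; rewrite -(conv_epsl HH x lg) /Defs.conv -big_split /=.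
by apply: eq_bigr => u _; rewrite -mulrDl addrC subrK.
Qed.

Lemma convpow_q_binomial k x :
  convpow q k x = \sum_(p < k.+1) 'C(k, p)%:R * convpow phi p x.
Proof.
elim: k x => [|k IH] x; first by rewrite big_ord1 bin0 mul1r.
rewrite -(sum_bin_pascal (fun p => convpow phi p x)) /= /Defs.conv.
rewrite (eq_bigr (fun u => \sum_(p < k.+1) q u.1 * ('C(k, p)%:R * convpow phi p u.2)));
  last by move=> u _; rewrite IH mulr_sumr.
rewrite exchange_big /=; apply: eq_bigr => p _.
under eq_bigr => u _ do rewrite mulrCA.
rewrite -mulr_sumr; congr (_ * _).
exact: conv_q_phi x (linform_convpow HH p linform_phi).
Qed.

Lemma conv_scaled_q (t : K) chi n x : linform chi ->
  (forall d z, proj d z = z -> chi z = t ^+ d * q z) -> proj n x = x ->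
  conv chi chi x = t ^+ n * conv q q x.
Proof.
move=> lc hc hx.
rewrite (conv_gradedE hx lc lc) (conv_gradedE hx qlin qlin) mulr_sumr.
apply: eq_bigr => p _; rewrite mulr_sumr; apply: eq_bigr => u _.
rewrite (hc p _ (projK _ _ _)) (hc (n - p)%N _ (projK _ _ _)).
have -> : t ^+ n = t ^+ p * t ^+ (n - p) by rewrite -exprD subnKC // -ltnS.
ring.
Qed.

Lemma convpow_q_exp2 j d z : proj d z = z ->
  convpow q (2 ^ j) z = ((2 ^ j)%N%:R) ^+ d * q z.
Proof.
elim: j d z => [|j IH] d z hz; first by rewrite /= conv_epsr // expr1n mul1r.
rewrite expnS mul2n -addnn convpowD // (conv_scaled_q (linform_convpow HH _ qlin) IH hz).
rewrite (conv_qq hz) natrD.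
have -> : ((2 ^ j)%N%:R + (2 ^ j)%N%:R : K) = 2%:R * (2 ^ j)%N%:R by ring.
by rewrite exprMn; ring.
Qed.

Lemma sum_gbinom_convpow_phi h n x : proj n x = x ->
  \sum_(p < n.+1) gbinom h p * convpow phi p x = h ^+ n * q x.
Proof.
move=> hx; pose rs : seq K := [seq (2 ^ j)%N%:R | j <- iota 0 n.+1].
apply: (@gbinom_interpolation K n (fun p => convpow phi p x) (q x) rs).
- by rewrite map_inj_uniq ?iota_uniq // => a b /(natf_inj charK0); apply: expnI.
- by rewrite size_map size_iota.
move=> _ /mapP[j _ ->]; rewrite -(convpow_q_exp2 j hx) convpow_q_binomial.
under eq_bigr => p _ do rewrite (gbinom_nat charK0).
apply: (eq_sum_ord_trunc (F := fun p => 'C(2 ^ j, p)%:R * convpow phi p x)) => i hi.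
  by rewrite (convpow_phi_eq0 hi hx) mulr0.
by rewrite bin_small // mul0r.
Qed.

Lemma gbndP x n : (gbnd HH x <= n)%N -> proj n x = 0.
Proof. by rewrite /gbnd; case: constructive_indefinite_description => N hN /=; apply: hN. Qed.

Lemma qpow_sum h x M : (forall n, (M <= n)%N -> proj n x = 0) ->
  qpow HH q h x = \sum_(n < M) h ^+ n * q (proj n x).
Proof.
move=> hM; set B := (gbnd HH x).+1.
have hB n : (B <= n)%N -> proj n x = 0 by move=> ?; apply: gbndP; apply: ltnW.
transitivity (\sum_(n < B) h ^+ n * q (proj n x)); last first.
  apply: (eq_sum_ord_trunc (F := fun n => h ^+ n * q (proj n x))) => n.
    by move/hB ->; rewrite linform0 // mulr0.
  by move/hM ->; rewrite linform0 // mulr0.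
have E p : convpow phi p x = \sum_(n < B) convpow phi p (proj n x).
  by rewrite [in LHS](proj_sum hB) (linform_sum _ _ (linform_convpow HH p linform_phi)).
rewrite /qpow -/B; under eq_bigr => p _ do rewrite E mulr_sumr.
rewrite exchange_big /=; apply: eq_bigr => n _.
rewrite -(sum_gbinom_convpow_phi h (projK HH n x)).
apply: (sum_ord_trunc (F := fun p => gbinom h p * convpow phi p (proj n x))) => //.
by move=> i hi; rewrite (convpow_phi_eq0 hi (projK HH n x)) mulr0.
Qed.

Lemma qpow_homog h n x : proj n x = x -> qpow HH q h x = h ^+ n * q x.
Proof.
move=> hx; rewrite (@qpow_sum h x n.+1); last first.
  by move=> m hm; rewrite -hx proj_proj (gtn_eqF hm).
rewrite big_ord_recr /= hx big1 ?add0r // => i _.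
by rewrite -hx proj_proj (ltn_eqF (ltn_ord i)) linform0 // mulr0.
Qed.

Lemma linform_qpow h : linform (qpow HH q h).
Proof.
move=> a x y.
have [Mx hMx] := proj_fin HH x; have [My hMy] := proj_fin HH y.
have hx n : (maxn Mx My <= n)%N -> proj n x = 0.
  by move=> hn; apply: hMx; apply: leq_trans hn; apply: leq_maxl.
have hy n : (maxn Mx My <= n)%N -> proj n y = 0.
  by move=> hn; apply: hMy; apply: leq_trans hn; apply: leq_maxr.
rewrite (@qpow_sum h _ _ hx) (@qpow_sum h _ _ hy) (@qpow_sum h _ (maxn Mx My)).
  by rewrite mulr_sumr -big_split /=; apply: eq_bigr => n _; rewrite proj_lin qlin; ring.
by move=> n hn; rewrite proj_lin hx ?hy // scaler0 addr0.
Qed.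

Lemma qpow_character h : is_character (qpow HH q h).
Proof.
split; first exact: linform_qpow.
split; first by rewrite (@qpow_homog h 0 _ (one_graded HH)) expr0 mul1r.
apply: (linform_mul_homog (HH := HH) (linform_qpow h)) => n m x y hx hy.
rewrite (@qpow_homog h _ _ (mul_graded hx hy)) (@qpow_homog h _ _ hx) (@qpow_homog h _ _ hy).
by rewrite q_mul exprD; ring.
Qed.

End InverseFactorialCharacter.

Theorem mainTheorem1 (K : fieldType) (H : algType K) (HH : cgHopf H)
  (charK0 : [pchar K] =i pred0)
  (alpha : H -> K)
  (alpha_lin : forall (a : K) (x y : H), proj HH 1 x = x -> proj HH 1 y = y ->
                 alpha (a *: x + y) = a * alpha x + alpha y)
  (alpha_nz : exists x, proj HH 1 x = x /\ alpha x != 0)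
  (q : H -> K) (hq : is_qalpha HH alpha q) :
  (forall x y : H, q (x * y) = q x * q y) /\
  (forall h : K,
     is_character (qpow HH q h) /\
     (forall (n : nat) (x : H), proj HH n x = x -> qpow HH q h x = h ^+ n * q x)).
Proof.
(* Only the recursion for [q] is needed, not its values [alpha] in degree 1. *)
case: hq => qlin [q1 [_ qrec]].
split; first exact: (q_mul charK0 qlin q1 qrec).
move=> h; split; first exact: (qpow_character charK0 qlin q1 qrec).
exact: (qpow_homog charK0 qlin q1 qrec).
Qed.
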